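(* Let $F:[0,\infty)\to[0,1]$ be a monotonically non-decreasing function, let $q_0\ge 0$, and let $(x_t)_{t\ge 0}$ be the real sequence defined by $x_0\ge 0$ and $x_{t+1}=F(x_t)\,x_t+q_0$ for $t\ge 0$. Suppose the set $\Gamma=\{t\ge 1 : x_t\le x_{t-1}\}$ is non-empty. Then: 1) If $q_0\neq 0$, then for every $t_0\in\Gamma$ and every $t\ge t_0$, $$x_t\le F(x_{t_0})^{t-t_0}\,x_{t_0}+q_0\,\frac{1-F(x_{t_0})^{t-t_0}}{1-F(x_{t_0})}.$$ 2) For every $t_0\in\Gamma$, $\sup_{t\ge t_0}x_t\le x_{t_0}$. 3) $\limsup_{t\to\infty}x_t\le \inf_{t_0\in\Gamma}x_{t_0}$.
   Context: $F(x)^{k}$ denotes the $k$-th power of the number $F(x)$. *)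

From HB Require Import structures.
From mathcomp Require Import all_boot all_order all_algebra.
From mathcomp Require Import all_classical all_reals all_analysis.
Set Implicit Arguments. Unset Strict Implicit. Unset Printing Implicit Defensive.
Import Order.TTheory GRing.Theory Num.Theory.
Local Open Scope ring_scope.
Local Open Scope classical_set_scope.

Definition Gamma {R : realType} (x : nat -> R) : set nat :=
  [set t | (1 <= t)%N /\ x t <= x t.-1].

(* Once x_{t0} <= x_{t0-1} the sequence is nonincreasing from t0 on: if
   x_{s+1} <= x_s, then F x_{s+1} <= F x_s by monotonicity, so
   x_{s+2} = F(x_{s+1}) x_{s+1} + q0 <= F(x_s) x_s + q0 = x_{s+1}.  Hence every
   x_t with t >= t0 is at most x_{t0}, which gives 2) and, through the tail
   suprema defining the limsup, 3).  Since also F x_t <= F x_{t0} =: a for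
   t >= t0, the sequence is dominated by the affine recursion y |-> a y + q0,
   whose iterates are the geometric expression of 1). *)

From HB Require Import structures.
From mathcomp Require Import all_boot all_order all_algebra.
From mathcomp Require Import all_classical all_reals all_analysis.
From mathcomp Require Import ring.
Import Order.TTheory GRing.Theory Num.Theory.
Local Open Scope ring_scope.
Local Open Scope classical_set_scope.

Lemma affine_iter_geometric (R : fieldType) (a y q : R) (k : nat) : 1 - a != 0 ->
  a * (a ^+ k * y + q * ((1 - a ^+ k) / (1 - a))) + q
  = a ^+ k.+1 * y + q * ((1 - a ^+ k.+1) / (1 - a)).
Proof. by move=> a_neq1; rewrite exprS; field. Qed.

Lemma le_affine_iter (R : numFieldType) (a q : R) (y : nat -> R) :
  0 <= a -> a != 1 -> (forall k, y k.+1 <= a * y k + q) ->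
  forall k, y k <= a ^+ k * y 0%N + q * ((1 - a ^+ k) / (1 - a)).
Proof.
move=> a_ge0 a_neq1 y_step; have a1 : 1 - a != 0 by rewrite subr_eq0 eq_sym.
elim=> [|k IHk]; first by rewrite expr0 mul1r subrr mul0r mulr0 addr0.
rewrite -affine_iter_geometric //; apply: le_trans (y_step k) _.
by rewrite lerD2r ler_wpM2l.
Qed.

Lemma limn_esup_le_tail_sup (R : realType) (u : (\bar R) ^nat) (n : nat) :
  (limn_esup u <= ereal_sup [set u t | t in [set t | (n <= t)%N]])%E.
Proof.
rewrite /limn_esup limf_esupE; apply: ereal_inf_lbound.
by exists [set t | (n <= t)%N] => //; exists n.
Qed.

Section DampedRecursion.

Variables (R : realType) (F : R -> R) (q0 : R) (x : nat -> R).
Hypothesis F01 : forall y, 0 <= y -> 0 <= F y <= 1.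
Hypothesis F_nondecr : forall y z, 0 <= y -> y <= z -> F y <= F z.
Hypothesis q0_ge0 : 0 <= q0.
Hypothesis x0_ge0 : 0 <= x 0%N.
Hypothesis xS : forall t, x t.+1 = F (x t) * x t + q0.

Lemma x_ge0 t : 0 <= x t.
Proof.
elim: t => [//|t IHt]; rewrite xS addr_ge0 // mulr_ge0 //.
by case/andP: (F01 _ IHt).
Qed.

Lemma F_ge0 t : 0 <= F (x t).
Proof. by case/andP: (F01 _ (x_ge0 t)). Qed.

Lemma x_nonincr_step s : x s.+1 <= x s -> x s.+2 <= x s.+1.
Proof.
move=> xs_dec; rewrite [x s.+2]xS [x s.+1 in X in _ <= X]xS lerD2r.
by apply: ler_pM => //; [exact: F_ge0 | exact: x_ge0 | exact: F_nondecr (x_ge0 _) _].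
Qed.

Lemma Gamma_nonincr t0 : Gamma x t0 -> forall t, (t0 <= t)%N -> x t.+1 <= x t.
Proof.
case: t0 => [[]//|t0] [_ dec_t0] t /subnKC <-.
by elim: (t - t0.+1)%N => [|k IHk]; rewrite ?addn0 ?addnS; apply: x_nonincr_step.
Qed.

Lemma Gamma_le t0 : Gamma x t0 -> forall t, (t0 <= t)%N -> x t <= x t0.
Proof.
move=> G t /subnKC <-; elim: (t - t0)%N => [|k IHk]; first by rewrite addn0.
by rewrite addnS (le_trans _ IHk) // (Gamma_nonincr _ G) ?leq_addr.
Qed.

Lemma Gamma_geometric_bound t0 : Gamma x t0 -> forall t, (t0 <= t)%N ->
  x t <= F (x t0) ^+ (t - t0) * x t0
         + q0 * ((1 - F (x t0) ^+ (t - t0)) / (1 - F (x t0))).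
Proof.
move=> G t /subnKC <-; rewrite addKn; set a := F (x t0).
have [a_eq1|a_neq1] := eqVneq a 1.
(* For a = 1 the quotient is 0 / 0 = 0, so the bound degenerates to x t0. *)
  by rewrite a_eq1 expr1n subrr mul0r mulr0 addr0 mul1r Gamma_le ?leq_addr.
have := @le_affine_iter _ a q0 (fun k => x (t0 + k)%N) (F_ge0 t0) a_neq1.
rewrite /= addn0; apply=> k.
rewrite addnS xS lerD2r ler_wpM2r ?x_ge0 //.
by apply: F_nondecr; rewrite ?x_ge0 ?Gamma_le ?leq_addr.
Qed.

Lemma Gamma_tail_sup_le t0 : Gamma x t0 ->
  (ereal_sup [set (x t)%:E | t in [set t | (t0 <= t)%N]] <= (x t0)%:E)%E.
Proof.
by move=> G; apply: ge_ereal_sup => _ [t /= t0_le_t <-]; rewrite lee_fin Gamma_le.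
Qed.

Lemma limn_esup_le_inf_Gamma :
  (limn_esup (fun t => (x t)%:E) <= ereal_inf [set (x t0)%:E | t0 in Gamma x])%E.
Proof.
apply: le_ereal_inf_tmp => _ [t0 G <-].
exact: le_trans (limn_esup_le_tail_sup _ _ t0) (Gamma_tail_sup_le _ G).
Qed.

End DampedRecursion.

Theorem lemma1 (R : realType) (F : R -> R) (q0 : R) (x : nat -> R)
  (HF01 : forall y, 0 <= y -> 0 <= F y <= 1)
  (HFmono : forall y z, 0 <= y -> y <= z -> F y <= F z)
  (Hq0 : 0 <= q0)
  (Hx0 : 0 <= x 0%N)
  (Hrec : forall t : nat, x t.+1 = F (x t) * x t + q0)
  (HGamma : Gamma x !=set0) :
  (q0 != 0 ->
    forall t0 : nat, Gamma x t0 -> forall t : nat, (t0 <= t)%N ->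
      x t <= F (x t0) ^+ (t - t0) * x t0
             + q0 * ((1 - F (x t0) ^+ (t - t0)) / (1 - F (x t0))))
  /\ (forall t0 : nat, Gamma x t0 ->
        (ereal_sup [set (x t)%:E | t in [set t | (t0 <= t)%N]] <= (x t0)%:E)%E)
  /\ (limn_esup (fun t => (x t)%:E) <= ereal_inf [set (x t0)%:E | t0 in Gamma x])%E.
Proof.
split; [|split].
- by move=> _; exact: Gamma_geometric_bound HF01 HFmono Hq0 Hx0 Hrec.
- exact: Gamma_tail_sup_le HF01 HFmono Hq0 Hx0 Hrec.
- exact: limn_esup_le_inf_Gamma HF01 HFmono Hq0 Hx0 Hrec.
Qed.
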